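(* Let $r\geq1$, let $\mathbf a=(a_1,\ldots,a_r)$ be positive integers, let $D$ be a positive common multiple of $a_1,\ldots,a_r$, and let $j\geq 1$ be an integer dividing $a_i$ for some $1\leq i\leq r$. Put $\rho_j=e^{2\pi i/j}$ and $m(j)=\#\{i:\ j\mid a_i\}$. Then for all $n\geq 0$, $$ W_{j}(n,\mathbf a) =\rho_j^{-n}\left(R_{j,m(j)}\, n^{m(j)-1} + \cdots + R_{j,2}\, n + R_{j,1}\right), \qquad R_{j,m}=\frac{1}{D}\sum_{v=0}^{D-1}\rho_j^v\, d_{\mathbf a,m-1}(v)\ (1\leq m\leq m(j)).$$
   Context: $p_{\mathbf a}(n)$ is the number of integer solutions $(x_1,\ldots,x_r)$ of $a_1x_1+\cdots+a_rx_r=n$ with all $x_i\geq 0$. It is a quasi-polynomial: there are unique functions $d_{\mathbf a,m}:\mathbb N\to\mathbb Q$ ($0\leq m\leq r-1$) with $d_{\mathbf a,m}(n+D)=d_{\mathbf a,m}(n)$ and $p_{\mathbf a}(n)=\sum_{m=0}^{r-1}d_{\mathbf a,m}(n)n^m$ for all $n\geq0$. There are also unique polynomials $P_\lambda$, indexed by the $D$-th roots of unity $\lambda$, with $p_{\mathbf a}(n)=\sum_{\lambda^D=1}P_\lambda(n)\lambda^{-n}$ for all $n\geq 0$. The Sylvester wave is defined by $W_j(n,\mathbf a)=P_{\rho_j}(n)\rho_j^{-n}$ (i.e. $P_{\rho_j}$ is the polynomial part of the quasi-polynomial $\rho_j^n p_{\mathbf a}(n)$). *)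

From HB Require Import structures.
From mathcomp Require Import all_boot all_order all_algebra.
From mathcomp Require Export complex.
From mathcomp Require Import reals trigo.
Set Implicit Arguments. Unset Strict Implicit. Unset Printing Implicit Defensive.
Import Order.TTheory GRing.Theory Num.Theory.
Local Open Scope ring_scope.
Local Open Scope complex_scope.

(* p_a(n): number of (x_1,...,x_r) in N^r with a_1 x_1 + ... + a_r x_r = n.
   Since all a_i >= 1, every solution has x_i <= n, so we may take x_i in 'I_(n.+1). *)
Definition p_a (r : nat) (a : 'I_r -> nat) (n : nat) : nat :=
  #|[set x : {ffun 'I_r -> 'I_n.+1} | (\sum_(i < r) a i * x i)%N == n]|.

Definition rho (R : realType) (j : nat) : R[i] :=
  (cos (2 * pi / j%:R)) +i* (sin (2 * pi / j%:R)).

Definition mult_j (r : nat) (a : 'I_r -> nat) (j : nat) : nat :=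
  #|[set i : 'I_r | (j %| a i)%N]|.

Definition is_quasipoly_decomp (r : nat) (a : 'I_r -> nat) (D : nat)
    (d : nat -> nat -> rat) : Prop :=
  (forall m n, (m < r)%N -> d m (n + D)%N = d m n) /\
  (forall n, (p_a a n)%:R = \sum_(m < r) d m n * (n%:R) ^+ m).

(* P : (roots of unity) -> polynomials, with p_a(n) = sum_{lambda^D = 1} P_lambda(n) lambda^{-n}.
   The D-th roots of unity are enumerated (without repetition) as rho_D^k, k < D. *)
Definition is_root_decomp (R : realType) (r : nat) (a : 'I_r -> nat) (D : nat)
    (P : R[i] -> {poly R[i]}) : Prop :=
  forall n : nat,
    (p_a a n)%:R = \sum_(k < D) (P (rho R D ^+ k)).[n%:R] * (rho R D ^+ k) ^- n.

Definition sylvester_wave (R : realType) (P : R[i] -> {poly R[i]}) (j n : nat) : R[i] :=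
  (P (rho R j)).[n%:R] * (rho R j) ^- n.

Definition Rcoef (R : realType) (D : nat) (d : nat -> nat -> rat) (j m : nat) : R[i] :=
  (D%:R)^-1 * \sum_(v < D) (rho R j) ^+ v * ratr (d m.-1 v).

(* Write the Sylvester waves as the components of an exponential polynomial: with
   z = rho_D, every function of the form n |-> sum_(k < D) Q_k(n) z^(-kn) determines its
   polynomials Q_k, because evaluating along a residue class mod D gives polynomials with
   infinitely many roots, and a discrete Fourier inversion then isolates each Q_k.
   Rewriting the quasi-polynomial decomposition in this form shows that P_(rho_j) has
   coefficients R_(j,m+1).  For the degree bound, the operator prod_i (E^(a_i) - 1)
   annihilates p_a (it counts solutions with every x_i = 0 of an equation with positive
   right-hand side); on the rho_j-component it acts by Q |-> rho_j^(-a_i) Q(X + a_i) - Q,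
   which keeps the degree of Q unless j | a_i, in which case it lowers it by one.  So
   P_(rho_j) has fewer than m(j) coefficients. *)

From HB Require Import structures.
From mathcomp Require Import all_boot all_order all_algebra.
From mathcomp Require Import complex reals trigo.
From mathcomp Require Import ring lra zify.
Set Implicit Arguments. Unset Strict Implicit. Unset Printing Implicit Defensive.
Import Order.TTheory GRing.Theory Num.Theory.

Section Compositions.
Variables (r : nat) (a : 'I_r -> nat).
Hypothesis a_gt0 : forall i, 0 < a i.

Definition solutions_zero_on (S : seq 'I_r) (n : nat) : {set {ffun 'I_r -> 'I_n.+1}} :=
  [set x : {ffun 'I_r -> 'I_n.+1} |
    ((\sum_(i < r) a i * x i)%N == n) && all (fun i => x i == 0 :> nat) S].

Definition p_zero_on (S : seq 'I_r) (n : nat) : nat := #|solutions_zero_on S n|.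

Lemma p_zero_on_nil n : p_zero_on [::] n = p_a a n.
Proof. by apply: eq_card => x; rewrite !inE andbT. Qed.

Lemma p_zero_on_all n : 0 < n -> p_zero_on (enum 'I_r) n = 0.
Proof.
move=> n_gt0; apply/eqP; rewrite cards_eq0; apply/eqP/setP => x; rewrite !inE.
apply/negbTE/andP => -[/eqP sum_x /allP x0]; move: n_gt0.
by rewrite -sum_x big1 // => i _; rewrite (eqP (x0 i (mem_enum _ i))) muln0.
Qed.

Lemma weighted_sum_bump (y : 'I_r -> nat) i :
  \sum_(k < r) a k * (y k + (k == i)) = \sum_(k < r) a k * y k + a i.
Proof.
under eq_bigr do rewrite mulnDr; rewrite big_split /=; congr (_ + _).
by rewrite (bigD1 i) //= eqxx muln1 big1 ?addn0 // => k /negbTE ->; rewrite muln0.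
Qed.

Lemma leq_weighted_sum (y : 'I_r -> nat) k : y k <= \sum_(l < r) a l * y l.
Proof. by rewrite (bigD1 k) //= (leq_trans (leq_pmull _ (a_gt0 k))) ?leq_addr. Qed.

(* Solutions with x_i > 0 correspond, by decrementing x_i, to solutions with right-hand side m. *)
Lemma p_zero_on_cons S i m : i \notin S ->
  p_zero_on S (m + a i) = p_zero_on S m + p_zero_on (i :: S) (m + a i).
Proof.
move=> iNS; set N := (m + a i).
rewrite /p_zero_on -(cardsID [set x : {ffun 'I_r -> 'I_N.+1} | x i == 0 :> nat]) addnC.
congr (_ + _); last first.
  by apply: eq_card => x; rewrite !inE /= -andbA [X in _ && X]andbC.
have all_bump (x : 'I_r -> nat) :
    all (fun k => x k + (k == i) == 0) S = all (fun k => x k == 0) S.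
  apply: eq_in_all => k kS.
  have -> : (k == i) = false by apply/eqP => ki; rewrite -ki kS in iNS.
  by rewrite addn0.
pose bump (y : {ffun 'I_r -> 'I_m.+1}) : {ffun 'I_r -> 'I_N.+1} :=
  [ffun k => inord (y k + (k == i))].
have bumpE y k : bump y k = y k + (k == i) :> nat.
  rewrite ffunE inordK // ltnS leq_add ?(leq_trans (leq_b1 _) (a_gt0 i)) //.
  by rewrite -ltnS.
rewrite -(card_in_imset (f := bump)); last first.
  move=> y1 y2 _ _ /ffunP e; apply/ffunP => k; apply/val_inj/(@addIn (k == i)).
  by rewrite -!bumpE e.
apply: eq_card => x; rewrite [RHS]inE; apply/idP/imsetP.
  rewrite !inE => /and3P [xi0 /eqP sum_x x0S].
  pose y (k : 'I_r) := (x k - (k == i))%N.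
  have yK k : y k + (k == i) = x k by rewrite subnK //; case: eqP => // ->; rewrite lt0n.
  have sum_y : (\sum_(k < r) a k * y k)%N = m.
    by apply/(@addIn (a i)); rewrite -weighted_sum_bump; under eq_bigr do rewrite yK.
  pose y' : {ffun 'I_r -> 'I_m.+1} := [ffun k => inord (y k)].
  have y'E k : y' k = y k :> nat by rewrite ffunE inordK // ltnS -sum_y leq_weighted_sum.
  exists y'.
    rewrite inE; under eq_bigr do rewrite y'E; rewrite sum_y eqxx /=.
    by under eq_all do rewrite y'E; rewrite -all_bump; under eq_all do rewrite yK.
  by apply/ffunP => k; apply: val_inj => /=; rewrite bumpE y'E yK.
move=> [y]; rewrite !inE => /andP [/eqP sum_y y0S] ->.
rewrite bumpE eqxx addn1 /=; under eq_bigr do rewrite bumpE.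
rewrite weighted_sum_bump sum_y eqxx /=; under eq_all do rewrite bumpE.
by rewrite all_bump.
Qed.

End Compositions.

Local Open Scope ring_scope.

Definition shift_diff (V : zmodType) (c : nat) (g : nat -> V) : nat -> V :=
  fun n => g (n + c)%N - g n.

Definition diff_chain (V : zmodType) (cs : seq nat) (g : nat -> V) : nat -> V :=
  foldr (@shift_diff V) g cs.

Lemma eq_diff_chain (V : zmodType) cs (f g : nat -> V) :
  f =1 g -> diff_chain cs f =1 diff_chain cs g.
Proof. by move=> fg; elim: cs => //= c cs IH n; rewrite /shift_diff !IH. Qed.

Section PartitionDifferences.
Variables (V : pzRingType) (r : nat) (a : 'I_r -> nat).
Hypothesis a_gt0 : forall i, (0 < a i)%N.

Lemma diff_chain_p_a S : uniq S -> forall n,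
  diff_chain (map a S) (fun n => (p_a a n)%:R : V) n =
  (p_zero_on a S (n + \sum_(i <- S) a i))%:R.
Proof.
elim: S => [_ n|i S IH /= /andP [iNS uS] n]; first by rewrite big_nil addn0 p_zero_on_nil.
rewrite /shift_diff !IH // big_cons addnA addnAC.
by rewrite (p_zero_on_cons a_gt0 _ iNS) natrD addrAC subrr add0r.
Qed.

Lemma diff_chain_p_a_eq0 n : (0 < r)%N ->
  diff_chain (map a (enum 'I_r)) (fun n => (p_a a n)%:R : V) n = 0.
Proof.
move=> r_gt0; rewrite diff_chain_p_a ?enum_uniq // p_zero_on_all //.
by rewrite (bigD1_seq (Ordinal r_gt0)) ?mem_enum ?enum_uniq //= addnCA ltn_addr.
Qed.

End PartitionDifferences.

Section ShiftedPolynomials.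
Variable F : numDomainType.
Implicit Types (p q Q : {poly F}) (mu : F).

Lemma poly_nat_roots_eq0 p (f : nat -> nat) :
  injective f -> (forall t, p.[(f t)%:R] = 0) -> p = 0.
Proof.
move=> f_inj p_f0; apply/eqP; apply: contraT => p_neq0.
pose rs := [seq (f t)%:R : F | t <- iota 0 (size p)].
have rs_roots : all (root p) rs by apply/allP => x /mapP [t _ ->]; apply/rootP.
have rs_uniq : uniq rs.
  by rewrite map_inj_uniq ?iota_uniq // => x y /eqP; rewrite eqr_nat => /eqP /f_inj.
by have := max_poly_roots p_neq0 rs_roots rs_uniq; rewrite size_map size_iota ltnn.
Qed.

Lemma size_lead_coefD_eq p q n :
  size p = n.+1 -> size q = n.+1 -> lead_coef p + lead_coef q != 0 ->
  size (p + q) = n.+1 /\ lead_coef (p + q) = lead_coef p + lead_coef q.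
Proof.
move=> sp sq lpq_neq0.
have coef_n : (p + q)`_n = lead_coef p + lead_coef q by rewrite coefD !lead_coefE sp sq.
suff spq : size (p + q) = n.+1 by split=> //; rewrite lead_coefE spq.
apply/eqP; rewrite eqn_leq (leq_trans (size_polyD _ _)) ?sp ?sq ?maxnn //=.
rewrite ltnNge; apply: contra lpq_neq0 => /leq_sizeP /(_ n (leqnn n)).
by rewrite coef_n => ->; rewrite eqxx.
Qed.

Lemma size_comp_XaddC p (c : F) : size (p \Po ('X + c%:P)) = size p.
Proof. by rewrite size_comp_poly2 // size_XaddC. Qed.

Lemma lead_coef_comp_XaddC p (c : F) : lead_coef (p \Po ('X + c%:P)) = lead_coef p.
Proof. by rewrite lead_coef_comp ?size_XaddC // lead_coefXaddC expr1n mulr1. Qed.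

Lemma size_lead_coef_shift_diff (c : F) n Q : c != 0 -> size Q = n.+2 ->
  size (Q \Po ('X + c%:P) - Q) = n.+1 /\
  lead_coef (Q \Po ('X + c%:P) - Q) = n.+1%:R * c * lead_coef Q.
Proof.
move=> c_neq0; elim/poly_ind: Q n => [|p k IH] n; first by rewrite size_poly0.
rewrite size_MXaddC; case: ifP => // _ [sp].
have p_neq0 : p != 0 by rewrite -size_poly_gt0 sp.
have -> : lead_coef (p * 'X + k%:P) = lead_coef p.
  rewrite lead_coefDl ?lead_coefMX // size_mulX // size_polyC sp ltnS.
  exact: leq_trans (leq_b1 _) _.
have -> : (p * 'X + k%:P) \Po ('X + c%:P) - (p * 'X + k%:P) =
    (p \Po ('X + c%:P) - p) * 'X + c *: (p \Po ('X + c%:P)).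
  by rewrite comp_polyD comp_polyM comp_polyX comp_polyC -mul_polyC; ring.
case: n sp => [|n] sp.
  have p_const : p = (lead_coef p)%:P by rewrite {1}(size1_polyC (eq_leq sp)) lead_coefE sp.
  rewrite p_const comp_polyC subrr mul0r add0r size_scale // size_polyC lead_coefZ lead_coefC.
  by rewrite lead_coef_eq0 p_neq0 mul1r.
have [sd ld] := IH _ sp.
set p' := p \Po ('X + c%:P).
have lead_sum : lead_coef ((p' - p) * 'X) + lead_coef (c *: p') = n.+2%:R * c * lead_coef p.
  by rewrite lead_coefMX ld lead_coefZ lead_coef_comp_XaddC [n.+2%:R]mulrSr; ring.
have [] := @size_lead_coefD_eq ((p' - p) * 'X) (c *: p') n.+1.
- by rewrite size_mulX ?sd // -size_poly_gt0 sd.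
- by rewrite size_scale // size_comp_XaddC.
- by rewrite lead_sum !mulf_neq0 ?pnatr_eq0 ?lead_coef_eq0.
by move=> -> ->.
Qed.

(* With mu = w^-c, this is the polynomial part of (E^c - 1) applied to n |-> Q(n) w^-n. *)
Definition shift_sub mu (c : nat) Q : {poly F} := mu *: (Q \Po ('X + c%:R%:P)) - Q.

Lemma size_shift_sub mu (c : nat) Q :
  (0 < c)%N -> (size Q - (mu == 1%R) <= size (shift_sub mu c Q))%N.
Proof.
move=> c_gt0; have c_neq0 : c%:R != 0 :> F by rewrite pnatr_eq0 -lt0n.
have [->|mu_neq1] := eqVneq mu 1.
  rewrite /shift_sub scale1r; case sQ: (size Q) => [|[|n]] //.
  by have [-> _] := size_lead_coef_shift_diff c_neq0 sQ; rewrite subn1.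
rewrite subn0; have [->|mu_neq0] := eqVneq mu 0.
  by rewrite /shift_sub scale0r sub0r size_polyN.
case sQ: (size Q) => [|n] //.
have [] := @size_lead_coefD_eq (mu *: (Q \Po ('X + c%:R%:P))) (- Q) n.
- by rewrite size_scale ?size_comp_XaddC.
- by rewrite size_polyN.
- rewrite lead_coefZ lead_coef_comp_XaddC lead_coefN -mulN1r -mulrDl.
  by rewrite mulf_neq0 ?subr_eq0 // lead_coef_eq0 -size_poly_gt0 sQ.
by move=> ->.
Qed.

Definition shift_sub_chain (mu : nat -> F) (cs : seq nat) Q : {poly F} :=
  foldr (fun c => shift_sub (mu c) c) Q cs.

Lemma size_shift_sub_chain (mu : nat -> F) cs Q : all (fun c => 0 < c)%N cs ->
  (size Q - count (fun c => mu c == 1%R) cs <= size (shift_sub_chain mu cs Q))%N.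
Proof.
elim: cs => [|c cs IH] /=; first by rewrite subn0.
move=> /andP [c_gt0 /IH]; have := size_shift_sub (mu c) (shift_sub_chain mu cs Q) c_gt0.
by case: (mu c == 1) => /=; lia.
Qed.

End ShiftedPolynomials.

Lemma sum_expr_unity (F : idomainType) (D : nat) (x : F) : x ^+ D = 1 ->
  \sum_(k < D) x ^+ k = if x == 1 then D%:R else 0.
Proof.
move=> xD1; have [->|x_neq1] := eqVneq x 1.
  by under eq_bigr do rewrite expr1n; rewrite sumr_const card_ord.
apply/eqP; have := subrX1 x D; rewrite xD1 subrr => /esym/eqP.
by rewrite mulf_eq0 subr_eq0 (negbTE x_neq1).
Qed.

Section ExponentialPolynomials.
Variables (F : numFieldType) (D : nat) (u : F).
Hypothesis u_prim : D.-primitive_root u.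
Let D_gt0 : (0 < D)%N := prim_order_gt0 u_prim.
Implicit Types (P Q A : nat -> {poly F}).

Let unity_exp k : (u ^+ k) ^+ D = 1.
Proof. by rewrite exprAC (prim_expr_order u_prim) expr1n. Qed.

Definition expoly Q (n : nat) : F := \sum_(k < D) (Q k).[n%:R] * (u ^+ k) ^- n.

Lemma sum_prim_root_expr s t :
  \sum_(k < D) (u ^+ k) ^+ s / (u ^+ k) ^+ t = if s == t %[mod D] then D%:R else 0.
Proof.
have ut_neq0 : u ^+ t != 0 by rewrite expf_neq0 // (prim_root_eq0 u_prim) gtn_eqF.
under eq_bigr => k _ do rewrite [(u ^+ k) ^+ s]exprAC [(u ^+ k) ^+ t]exprAC -expr_div_n.
rewrite sum_expr_unity; last by rewrite expr_div_n !unity_exp divr1.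
by rewrite -(inj_eq (mulIf ut_neq0)) divfK // mul1r (eq_prim_root_expr u_prim).
Qed.

Lemma expoly_eq0 Q : (forall n, expoly Q n = 0) -> forall l, (l < D)%N -> Q l = 0.
Proof.
move=> Q0 l lD.
(* H s agrees with expoly Q on the residue class of s, hence vanishes identically. *)
pose H s := \sum_(k < D) (u ^+ k) ^- s *: Q k.
have H0 s : H s = 0.
  apply: (@poly_nat_roots_eq0 _ _ (fun t => s + t * D)%N).
    by move=> t1 t2 /eqP; rewrite eqn_add2l eqn_mul2r gtn_eqF //= => /eqP.
  move=> t; rewrite -[RHS](Q0 (s + t * D)%N) horner_sum; apply: eq_bigr => k _.
  by rewrite hornerZ mulrC exprD mulnC exprM unity_exp expr1n mulr1.
have : \sum_(s < D) (u ^+ s) ^+ l *: H s = D%:R *: Q l.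
  under eq_bigr do rewrite scaler_sumr; rewrite exchange_big /=.
  under eq_bigr => k _.
    under eq_bigr => s _ do rewrite scalerA [(u ^+ k) ^+ s]exprAC.
    rewrite -scaler_suml sum_prim_root_expr !modn_small //.
  over.
  rewrite (bigD1 (Ordinal lD)) //= eqxx big1 ?addr0 // => k.
  by rewrite -val_eqE /= eq_sym => /negbTE ->; rewrite scale0r.
under eq_bigr do rewrite H0 scaler0.
by rewrite big1 // => /esym/eqP; rewrite scaler_eq0 pnatr_eq0 gtn_eqF //= => /eqP.
Qed.

Lemma expoly_inj P Q :
  (forall n, expoly P n = expoly Q n) -> forall l, (l < D)%N -> P l = Q l.
Proof.
move=> PQ l lD; apply/eqP; rewrite -subr_eq0; apply/eqP.
apply: (@expoly_eq0 (fun k => P k - Q k)) => // n.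
rewrite /expoly; under eq_bigr do rewrite hornerD hornerN mulrBl.
by rewrite sumrB -/(expoly P n) -/(expoly Q n) PQ subrr.
Qed.

Lemma expoly_shift_diff c Q n :
  shift_diff c (expoly Q) n = expoly (fun k => shift_sub ((u ^+ k) ^- c) c (Q k)) n.
Proof.
rewrite /shift_diff /expoly -sumrB; apply: eq_bigr => k _.
rewrite /shift_sub hornerD hornerN hornerZ horner_comp hornerD hornerX hornerC natrD.
by rewrite exprD invfM; ring.
Qed.

Lemma expoly_diff_chain cs Q n : diff_chain cs (expoly Q) n =
  expoly (fun k => shift_sub_chain (fun c => (u ^+ k) ^- c) cs (Q k)) n.
Proof.
by elim: cs n => [|c cs IH] n //=; rewrite -expoly_shift_diff /shift_diff !IH.
Qed.

Lemma expoly_periodic A n :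
  expoly (fun k => D%:R^-1 *: \sum_(s < D) (u ^+ k) ^+ s *: A s) n = (A (n %% D)%N).[n%:R].
Proof.
rewrite /expoly.
under eq_bigr do rewrite hornerZ horner_sum mulr_sumr mulr_suml.
rewrite exchange_big /=.
under eq_bigr => s _.
  under eq_bigr => k _ do rewrite hornerZ mulrCA -mulrA mulrCA.
  rewrite -mulr_sumr sum_prim_root_expr.
over.
have nD : (n %% D < D)%N by rewrite ltn_mod.
rewrite (bigD1 (Ordinal nD)) //= modn_mod eqxx mulrAC mulVf ?mul1r ?pnatr_eq0 ?gtn_eqF //.
rewrite big1 ?addr0 // => s; rewrite -val_eqE /= (modn_small (ltn_ord s)) => /negbTE ->.
by rewrite mulr0.
Qed.

End ExponentialPolynomials.

Section RootsOfUnity.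
Variable R : realType.
Local Open Scope complex_scope.

Lemma cis_exprn (t : R) k :
  (cos t +i* sin t) ^+ k = cos (k%:R * t) +i* sin (k%:R * t).
Proof.
elim: k => [|k IH]; first by rewrite !mul0r cos0 sin0.
rewrite exprS IH -addn1 natrD mulrDl mul1r cosD sinD [LHS]/GRing.mul /=.
by congr (_ +i* _); ring.
Qed.

Lemma rho_expr_order n : (0 < n)%N -> rho R n ^+ n = 1.
Proof.
move=> n_gt0; rewrite /rho cis_exprn mulrCA divff ?pnatr_eq0 -?lt0n // mulr1.
by rewrite mulr_natl cos2pi sin2pi.
Qed.

Lemma rho_expr_neq1 n k : (0 < k)%N -> (k < n)%N -> rho R n ^+ k != 1.
Proof.
move=> k_gt0 k_lt_n; have n_gt0 : (0 < n)%N := ltn_trans k_gt0 k_lt_n.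
rewrite /rho cis_exprn; apply/negP => /eqP /(congr1 (@complex.Re R)) /=.
pose y : R := k%:R * (pi / n%:R).
have -> : k%:R * (2 * pi / n%:R) = y *+ 2 by rewrite /y mulr2n; ring.
have sin_y_gt0 : 0 < sin y.
  apply: sin_gt0_pi; rewrite mulr_gt0 ?ltr0n ?divr_gt0 ?pi_gt0 ?ltr0n //=.
  by rewrite /y mulrA ltr_pdivrMr ?ltr0n // mulrC ltr_pM2l ?pi_gt0 // ltr_nat.
rewrite cos_mulr2n cos2sin2 => sin2_y0.
have /eqP : sin y ^+ 2 = 0 by move: sin2_y0; rewrite mulr2n; lra.
by rewrite expf_eq0 /= (gt_eqF sin_y_gt0).
Qed.

Lemma rho_prim_root n : (0 < n)%N -> n.-primitive_root (rho R n).
Proof.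
move=> n_gt0; have [m m_prim m_dvd_n] := prim_order_exists n_gt0 (rho_expr_order n_gt0).
suff m_eq_n : m = n by rewrite -m_eq_n in m_prim *.
apply/eqP; rewrite eqn_leq dvdn_leq //=; apply: contraT; rewrite -ltnNge => m_lt_n.
by rewrite -(negbTE (rho_expr_neq1 (prim_order_gt0 m_prim) m_lt_n)) (prim_expr_order m_prim).
Qed.

Lemma rho_dvd n j : (0 < n)%N -> (0 < j)%N -> (j %| n)%N -> rho R j = rho R n ^+ (n %/ j).
Proof.
move=> n_gt0 j_gt0 j_dvd_n; rewrite /rho cis_exprn natr_div ?unitfE ?pnatr_eq0 -?lt0n //.
by congr (cos _ +i* sin _); field; rewrite !pnatr_eq0 -!lt0n j_gt0 n_gt0.
Qed.

End RootsOfUnity.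

Lemma periodic_mod (T : Type) (f : nat -> T) D :
  (forall n, f (n + D)%N = f n) -> forall n, f n = f (n %% D)%N.
Proof.
move=> f_per n; rewrite {1}(divn_eq n D) addnC.
by elim: (n %/ D)%N => [|q IH]; rewrite ?mul0n ?addn0 // mulSn addnCA addnC f_per.
Qed.

Lemma quasipoly_horner (F : numFieldType) r (a : 'I_r -> nat) D d :
  is_quasipoly_decomp a D d -> forall n,
  (p_a a n)%:R = (\poly_(m < r) ratr (d m (n %% D)%N) : {poly F}).[n%:R].
Proof.
move=> [d_per p_a_eq] n; rewrite horner_poly -ratr_nat p_a_eq rmorph_sum.
apply: eq_bigr => m _; rewrite rmorphM rmorphXn rmorph_nat.
by rewrite -(periodic_mod (d_per m ^~ (ltn_ord m))).
Qed.

Section SylvesterWaves.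
Variables (R : realType) (r : nat) (a : 'I_r -> nat) (D : nat) (P : R[i] -> {poly R[i]}).
Hypotheses (D_gt0 : (0 < D)%N) (root_decomp : is_root_decomp a D P).
Local Notation z := (rho R D).
Let z_prim : D.-primitive_root z := rho_prim_root R D_gt0.

Lemma root_decomp_coef d k : is_quasipoly_decomp a D d -> (k < D)%N ->
  P (z ^+ k) = \poly_(m < r) (D%:R^-1 * \sum_(v < D) (z ^+ k) ^+ v * ratr (d m v)).
Proof.
move=> qd k_lt_D.
rewrite (@expoly_inj _ _ _ z_prim (fun k => P (z ^+ k))
  (fun k => D%:R^-1 *: \sum_(v < D) (z ^+ k) ^+ v *: \poly_(m < r) ratr (d m v))) //.
  apply/polyP => m; rewrite coefZ coef_sum !coef_poly.
  under eq_bigr do rewrite coefZ coef_poly.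
  by case: (m < r)%N => //; rewrite big1 ?mulr0 // => v _; rewrite mulr0.
move=> n; rewrite (expoly_periodic z_prim (fun v => \poly_(m < r) ratr (d m v))).
by rewrite -(quasipoly_horner _ qd) root_decomp.
Qed.

Lemma size_root_decomp k : (forall i, 0 < a i)%N -> (0 < r)%N -> (k < D)%N ->
  (size (P (z ^+ k)) <= #|[set i | (z ^+ k) ^+ a i == 1%R]|)%N.
Proof.
move=> a_gt0 r_gt0 k_lt_D.
pose mu c := (z ^+ k) ^- c; pose cs := map a (enum 'I_r).
have chain0 : shift_sub_chain mu cs (P (z ^+ k)) = 0.
  apply: (expoly_eq0 z_prim (Q := fun k' => shift_sub_chain (fun c => (z ^+ k') ^- c) cs
    (P (z ^+ k')))) k_lt_D => n.
  by rewrite -expoly_diff_chain -(eq_diff_chain _ root_decomp) diff_chain_p_a_eq0.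
have := @size_shift_sub_chain _ mu cs (P (z ^+ k)).
rewrite chain0 size_poly0 leqn0 subn_eq0 all_map => /(_ (introT allP (fun i _ => a_gt0 i))).
move=> /leq_trans; apply; rewrite count_map cardsE cardE size_filter -enumT.
by apply/eq_leq/eq_count => i; rewrite /mu /= invr_eq1.
Qed.

End SylvesterWaves.

Theorem proposition4p1 (R : realType) (r : nat) (a : 'I_r -> nat) (D : nat)
    (d : nat -> nat -> rat) (P : R[i] -> {poly R[i]}) (j : nat) :
  (1 <= r)%N ->
  (forall i, (0 < a i)%N) ->
  (0 < D)%N ->
  (forall i, (a i %| D)%N) ->
  (1 <= j)%N ->
  (exists i, (j %| a i)%N) ->
  is_quasipoly_decomp a D d ->
  is_root_decomp a D P ->
  forall n : nat,
    sylvester_wave P j n =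
    (rho R j) ^- n * \sum_(m < mult_j a j) Rcoef R D d j m.+1 * (n%:R) ^+ m.
Proof.
move=> r_gt0 a_gt0 D_gt0 a_dvd_D j_gt0 [i0 j_dvd_a] qd rd n.
have j_dvd_D : (j %| D)%N := dvdn_trans j_dvd_a (a_dvd_D i0).
pose l := (D %/ j %% D)%N; have l_lt_D : (l < D)%N by rewrite ltn_pmod.
have rho_j : rho R D ^+ l = rho R j.
  by rewrite (prim_expr_mod (rho_prim_root R D_gt0)) -rho_dvd.
have P_rho_j : P (rho R j) = \poly_(m < r) Rcoef R D d j m.+1.
  rewrite -rho_j (root_decomp_coef D_gt0 rd qd l_lt_D).
  by apply: eq_poly => m _; rewrite rho_j.
have size_P : (size (P (rho R j)) <= mult_j a j)%N.
  rewrite -rho_j (leq_trans (size_root_decomp D_gt0 rd a_gt0 r_gt0 l_lt_D)) // rho_j.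
  by apply/eq_leq/eq_card => i; rewrite !inE (prim_order_dvd (rho_prim_root R j_gt0)).
have mult_j_le_r : (mult_j a j <= r)%N by rewrite (leq_trans (max_card _)) ?card_ord.
rewrite /sylvester_wave mulrC (horner_coef_wide _ size_P); congr (_ * _).
by apply: eq_bigr => m _; rewrite P_rho_j coef_poly (leq_trans (ltn_ord m) mult_j_le_r).
Qed.
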